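(* Let $(V,\mathrm{dist})$ be a metric space and let $B\subseteq A\subseteq V$ be finite (multi)sets. Then $$\mathrm{MaxCut}(B)+\tfrac14\,\mathrm{cut}(A\setminus B,A\setminus B)+\tfrac12\,\mathrm{cut}(A\setminus B,B)\ \le\ \mathrm{MaxCut}(A).$$
   Context: For $S,T\subseteq V$, $\mathrm{cut}(S,T):=\sum_{x\in S}\sum_{y\in T}\mathrm{dist}(x,y)$, and $\mathrm{MaxCut}(S):=\max_{T\subseteq S}\mathrm{cut}(T,S\setminus T)$. *)

From mathcomp Require Import all_boot all_order all_algebra.
From mathcomp Require Import reals.
Set Implicit Arguments. Unset Strict Implicit. Unset Printing Implicit Defensive.
Import Order.TTheory GRing.Theory Num.Theory.
Local Open Scope ring_scope.

Definition is_metric (R : realType) (V : Type) (dist : V -> V -> R) : Prop :=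
  [/\ forall x y, 0 <= dist x y,
      forall x y, dist x y = 0 <-> x = y,
      forall x y, dist x y = dist y x
    & forall x y z, dist x z <= dist x y + dist y z].

(* Finite multisets of points of V are represented by a finite index type I
   with a point map p : I -> V; a sub(multi)set is a set of indices. *)
Definition cut (R : realType) (V : Type) (dist : V -> V -> R)
  (I : finType) (p : I -> V) (S T : {set I}) : R :=
  \sum_(x in S) \sum_(y in T) dist (p x) (p y).

(* MaxCut(S) = max over T subset of S of cut(T, S \ T).  The family always
   contains T = set0 with value 0, so the neutral element 0 is harmless. *)
Definition MaxCut (R : realType) (V : Type) (dist : V -> V -> R)
  (I : finType) (p : I -> V) (S : {set I}) : R :=
  \big[Num.max/0]_(T : {set I} | T \subset S) cut dist p T (S :\: T).

(** Adding a new point c to a cut (Y, U \ Y), on the side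
    opposite to the one it is farther from, gains at least half of the total
    distance from c to U.  Start from a maximum cut of B and insert the points
    of A \ B one by one: each point gains half its distance to B plus half its
    distance to the previously inserted points of A \ B.  So every pair of
    points of A \ B contributes half its distance once, which is a quarter of
    cut(A \ B, A \ B), where each pair is counted twice. *)

From mathcomp Require Import all_boot all_order all_algebra.
From mathcomp Require Import reals lra.
Import Order.TTheory GRing.Theory Num.Theory.
Local Open Scope ring_scope.
Set Implicit Arguments. Unset Strict Implicit. Unset Printing Implicit Defensive.

Lemma disjoint_setD (T : finType) (A B : {set T}) : [disjoint A & B :\: A].
Proof. by rewrite disjoint_sym; case/subsetDP: (subxx (B :\: A)). Qed.

Lemma setDUK (T : finType) (A B : {set T}) : A \subset B -> A :|: B :\: A = B.
Proof. by move=> AB; rewrite setDE setUIr setUCr setIT; apply/setUidPr. Qed.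

Section Cut.

Variables (R : realType) (V : Type) (dist : V -> V -> R).
Variables (I : finType) (p : I -> V).

Local Notation cut := (cut dist p).
Local Notation MaxCut := (MaxCut dist p).

Lemma cut0l (T : {set I}) : cut set0 T = 0.
Proof. by rewrite /cut big_set0. Qed.

Lemma cutUl (S1 S2 T : {set I}) :
  [disjoint S1 & S2] -> cut (S1 :|: S2) T = cut S1 T + cut S2 T.
Proof.
by move=> dS; rewrite /cut -bigU //; apply: eq_bigl => x; rewrite !inE.
Qed.

Lemma le_MaxCut (S T : {set I}) : T \subset S -> cut T (S :\: T) <= MaxCut S.
Proof. exact: le_bigmax_cond (fun T : {set I} => cut T (S :\: T)). Qed.

Lemma MaxCut_le (S : {set I}) (x : R) :
  (forall T : {set I}, T \subset S -> cut T (S :\: T) <= x) -> MaxCut S <= x.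
Proof.
move=> cut_le; apply: bigmax_le => //.
by rewrite -(cut0l (S :\: set0)); apply/cut_le/sub0set.
Qed.

Hypothesis dist_sym : forall x y, dist x y = dist y x.
Hypothesis dist_xx : forall x, dist x x = 0.

Lemma cutC (S T : {set I}) : cut S T = cut T S.
Proof.
by rewrite /cut exchange_big; apply: eq_bigr => y _; apply: eq_bigr.
Qed.

Lemma cutUr (S T1 T2 : {set I}) :
  [disjoint T1 & T2] -> cut S (T1 :|: T2) = cut S T1 + cut S T2.
Proof. by move=> dT; rewrite cutC cutUl // !(cutC _ S). Qed.

Lemma cut_set11 (c : I) : cut [set c] [set c] = 0.
Proof. by rewrite /cut !big_set1. Qed.

Lemma cut_insert (c : I) (U Y : {set I}) : c \notin U -> Y \subset U ->
  exists2 Y' : {set I}, Y' \subset c |: U &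
    cut Y (U :\: Y) + cut [set c] U / 2 <= cut Y' ((c |: U) :\: Y').
Proof.
move=> cU YU.
have cY : c \notin Y by apply: contra cU; apply: (subsetP YU).
have cUY : c \notin U :\: Y by rewrite inE negb_and cU orbT.
have split_U : cut [set c] U = cut [set c] Y + cut [set c] (U :\: Y).
  by rewrite -cutUr ?setDUK ?disjoint_setD.
have [far_Y|far_UY] := leP (cut [set c] (U :\: Y)) (cut [set c] Y).
- exists Y; first exact: subset_trans YU (subsetUr _ _).
  have -> : (c |: U) :\: Y = c |: (U :\: Y).
    by apply/setP => x; rewrite !inE; case: eqP => // ->; rewrite (negbTE cY).
  rewrite cutUr ?disjoints1 // (cutC Y [set c]); lra.
- exists (c |: Y); first by rewrite setUS.
  have -> : (c |: U) :\: (c |: Y) = U :\: Y.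
    by apply/setP => x; rewrite !inE; case: eqP => //= ->; rewrite (negbTE cU) andbF.
  rewrite cutUl ?disjoints1 //; lra.
Qed.

Lemma cut_extend (B C T : {set I}) : [disjoint B & C] -> T \subset B ->
  exists2 Y : {set I}, Y \subset B :|: C &
    cut T (B :\: T) + cut C B / 2 + cut C C / 4 <= cut Y ((B :|: C) :\: Y).
Proof.
move=> + TB; have [n] := ubnP #|C|; elim: n C => // n IH C.
have [-> _ _|[c Cc] card_C dBC] := set_0Vmem C.
  by exists T; rewrite ?setU0 ?cut0l //; lra.
set C' := C :\ c.
have eC : C = c |: C' by rewrite setD1K.
have cC' : c \notin C' by rewrite !inE eqxx.
have cB : c \notin B by apply/negP => /(disjointFr dBC); rewrite Cc.
have dBC' : [disjoint B & C'] := disjointWr (subsetDl _ _) dBC.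
have card_C' : (#|C'| < n)%N by move: card_C; rewrite eC cardsU1 cC' add1n ltnS.
have [Y1 Y1BC' gain_C'] := IH C' card_C' dBC'.
have cBC' : c \notin B :|: C' by rewrite inE negb_or cB.
have [Y] := cut_insert cBC' Y1BC'; rewrite -setUCA -eC => YBC gain_c.
exists Y => //.
have cut_CB : cut C B = cut [set c] B + cut C' B by rewrite eC cutUl ?disjoints1.
have cut_cBC' : cut [set c] (B :|: C') = cut [set c] B + cut [set c] C'.
  by rewrite cutUr.
have cut_CC : cut C C = cut [set c] C' *+ 2 + cut C' C'.
  rewrite eC cutUl ?cutUr ?disjoints1 // cut_set11 (cutC C' [set c]); lra.
lra.
Qed.

End Cut.

Theorem fact4p6 (R : realType) (V : Type) (dist : V -> V -> R)
  (I : finType) (p : I -> V) (A B : {set I}) :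
  is_metric dist -> B \subset A ->
  MaxCut dist p B + (1 / 4) * cut dist p (A :\: B) (A :\: B)
    + (1 / 2) * cut dist p (A :\: B) B
  <= MaxCut dist p A.
Proof.
case=> _ dist0 dist_sym _ BA.
have dist_xx x : dist x x = 0 by apply/dist0.
rewrite -lerBrDr -lerBrDr; apply: MaxCut_le => T TB.
have [Y YA gain] := cut_extend p dist_sym dist_xx (disjoint_setD B A) TB.
rewrite setDUK // in YA gain; have := le_MaxCut dist p YA; lra.
Qed.
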